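(* In the setting below, assume $Z_1(1)\in\overline{\mathsf{Q}_1}$ and $Z_2(1)\in\overline{\mathsf{Q}_4}$, and define $\widetilde Z_1(t)=(|Z_{1x}(t)|,|Z_{1y}(t)|)$, $\widetilde Z_2(t)=(|Z_{2x}(t)|,-|Z_{2y}(t)|)$ for $t\in[0,1]$. Then for every $t\in(0,1]$, \[U(Z_1(t),Z_2(t))\ge U(\widetilde Z_1(t),\widetilde Z_2(t)),\] where $U(Z_1,Z_2)=\frac{1}{|Z_1|}+\frac{1}{|Z_2+\frac12Z_1|}+\frac{1}{|Z_2-\frac12Z_1|}$, and equality holds if and only if $Z_1(t)$ and $Z_2(t)$ lie in two adjacent closed quadrants respectively.
   Context: Planar three-body problem with masses $m_1=m_2=m_3=1$, $\chi=\{q=(q_1,q_2,q_3)\in(\mathbb{R}^2)^3: q_1+q_2+q_3=0\}$, action $\mathcal{A}(q)=\int_0^1\big(\tfrac12\sum|\dot q_i|^2+\sum_{i<j}\frac{1}{|q_i-q_j|}\big)dt$. Let $Q_{S_4}=\{q: q_1=q_2=(-a_2,0),\ q_3=(2a_2,0),\ a_2\ge0\}$ and $Q_{E_1}=\{q: q_1=(0,-2b_1),\ q_2=(-b_2,b_1),\ q_3=(b_2,b_1),\ b_1,b_2\in\mathbb{R}\}$. Let $q$ minimize $\mathcal{A}$ over $\{q\in H^1([0,1],\chi): q(0)\in Q_{S_4},\ q(1)\in Q_{E_1}\}$. Jacobi coordinates: $Z_1=q_1-q_2=(Z_{1x},Z_{1y})$, $Z_2=q_3-\frac{q_1+q_2}{2}=(Z_{2x},Z_{2y})$;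 in these coordinates $\mathcal{A}=\int_0^1\big(\tfrac14|\dot Z_1|^2+\tfrac13|\dot Z_2|^2+U(Z_1,Z_2)\big)dt$. Standing facts/assumptions: the minimizer is collision-free for $t\in(0,1]$ (so $Z_1(t)\neq0$ there and it solves Newton's equations), $Z_1(0)=0$, and $Z_2(0)=(3a_2,0)$ with $a_2>0$. $\mathsf{Q}_i$ denotes the open $i$-th quadrant of the $xy$-plane and $\overline{\mathsf{Q}_i}$ its closure; two quadrants are adjacent if they share a half-axis. *)

From HB Require Import structures.
From mathcomp Require Import all_boot all_order all_algebra.
From mathcomp Require Import all_classical all_reals all_analysis.
Set Implicit Arguments. Unset Strict Implicit. Unset Printing Implicit Defensive.
Import Order.TTheory GRing.Theory Num.Theory.
Import numFieldNormedType.Exports.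
Local Open Scope classical_set_scope.
Local Open Scope ring_scope.

Section ThreeBody.
Variable R : realType.

Definition point := (R * R)%type.
Definition config := (point * point * point)%type.

Definition body1 (c : config) : point := c.1.1.
Definition body2 (c : config) : point := c.1.2.
Definition body3 (c : config) : point := c.2.

Definition padd (p r : point) : point := (p.1 + r.1, p.2 + r.2).
Definition psub (p r : point) : point := (p.1 - r.1, p.2 - r.2).
Definition pscale (k : R) (p : point) : point := (k * p.1, k * p.2).

Definition pnorm (p : point) : R := Num.sqrt (p.1 ^+ 2 + p.2 ^+ 2).

Definition in_chi (c : config) : Prop :=
  padd (padd (body1 c) (body2 c)) (body3 c) = (0, 0).

Definition in_QS4 (c : config) : Prop :=
  exists a2 : R, 0 <= a2 /\ body1 c = (- a2, 0) /\ body2 c = (- a2, 0)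
                 /\ body3 c = (2 * a2, 0).
Definition in_QE1 (c : config) : Prop :=
  exists b1 b2 : R, body1 c = (0, - (2 * b1)) /\ body2 c = (- b2, b1)
                    /\ body3 c = (b2, b1).

(* H^1 on [0,1] for a scalar function f with weak derivative g:
   g is square integrable on [0,1] and f(t) = f(0) + int_0^t g. *)
Definition H1_coord (f g : R -> R) : Prop :=
  (@lebesgue_measure R).-integrable `[0, 1] (EFin \o g) /\
  (@lebesgue_measure R).-integrable `[0, 1] (EFin \o (fun s => g s ^+ 2)) /\
  forall t : R, 0 <= t <= 1 ->
    f t = f 0 + \int[@lebesgue_measure R]_(s in `[0, t]) g s.

Definition H1_point (p w : R -> point) : Prop :=
  H1_coord (fun t => (p t).1) (fun t => (w t).1) /\
  H1_coord (fun t => (p t).2) (fun t => (w t).2).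

Definition H1_path (q v : R -> config) : Prop :=
  H1_point (body1 \o q) (body1 \o v) /\
  H1_point (body2 \o q) (body2 \o v) /\
  H1_point (body3 \o q) (body3 \o v).

(* 1/r as an extended real, +oo at collisions (r = 0) *)
Definition inv_e (r : R) : \bar R := if r == 0 then +oo%E else (r^-1)%:E.

Definition potential_e (c : config) : \bar R :=
  (inv_e (pnorm (psub (body1 c) (body2 c))) +
   inv_e (pnorm (psub (body1 c) (body3 c))) +
   inv_e (pnorm (psub (body2 c) (body3 c))))%E.

(* kinetic energy (1/2) sum |v_i|^2, all masses equal to 1 *)
Definition kinetic (w : config) : R :=
  2^-1 * (pnorm (body1 w) ^+ 2 + pnorm (body2 w) ^+ 2 + pnorm (body3 w) ^+ 2).

Definition action (q v : R -> config) : \bar R :=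
  \int[@lebesgue_measure R]_(t in `[0, 1])
     ((kinetic (v t))%:E + potential_e (q t))%E.

Definition admissible (q v : R -> config) : Prop :=
  H1_path q v /\ (forall t : R, 0 <= t <= 1 -> in_chi (q t)) /\
  in_QS4 (q 0) /\ in_QE1 (q 1).

Definition is_minimizer (q : R -> config) : Prop :=
  exists v, admissible q v /\
    forall p w, admissible p w -> (action q v <= action p w)%E.

Definition collision_free (c : config) : Prop :=
  body1 c <> body2 c /\ body1 c <> body3 c /\ body2 c <> body3 c.

Definition Jac1 (c : config) : point := psub (body1 c) (body2 c).
Definition Jac2 (c : config) : point :=
  psub (body3 c) (pscale (2^-1) (padd (body1 c) (body2 c))).

(* potential in Jacobi coordinates *)
Definition U (Z1 Z2 : point) : R :=
  (pnorm Z1)^-1 + (pnorm (padd Z2 (pscale (2^-1) Z1)))^-1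
  + (pnorm (psub Z2 (pscale (2^-1) Z1)))^-1.

Definition tilde1 (p : point) : point := (`|p.1|, `|p.2|).
Definition tilde2 (p : point) : point := (`|p.1|, - `|p.2|).

End ThreeBody.

Inductive quadrant := QI | QII | QIII | QIV.

Definition in_closed_quadrant (R : realType) (i : quadrant) (p : point R) : Prop :=
  match i with
  | QI => 0 <= p.1 /\ 0 <= p.2
  | QII => p.1 <= 0 /\ 0 <= p.2
  | QIII => p.1 <= 0 /\ p.2 <= 0
  | QIV => 0 <= p.1 /\ p.2 <= 0
  end.

Definition adjacent_quadrants (i j : quadrant) : Prop :=
  match i, j with
  | QI, QII | QII, QI | QII, QIII | QIII, QII
  | QIII, QIV | QIV, QIII | QIV, QI | QI, QIV => True
  | _, _ => False
  end.

From Pilot Require Import Defs.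
From HB Require Import structures.
From mathcomp Require Import all_boot all_order all_algebra.
From mathcomp Require Import all_classical all_reals all_analysis.
From mathcomp Require Import ring lra.
Set Implicit Arguments. Unset Strict Implicit. Unset Printing Implicit Defensive.
Import Order.TTheory GRing.Theory Num.Theory.
Local Open Scope ring_scope.

(* Only the two terms of U involving Z2 +- Z1/2 can change, since |tilde1 Z1| = |Z1|.
   For X = |Z2 + Z1/2| and Y = |Z2 - Z1/2|, the sum X^2 + Y^2 is invariant under
   the sign changes of the coordinates, while (XY)^2 = (|Z2|^2 + |Z1|^2/4)^2 - (Z1.Z2)^2
   only sees the dot product, and passing to tilde1 Z1, tilde2 Z2 lowers (Z1.Z2)^2 by a
   positive multiple of w + |w|, where w = Z1x Z1y Z2x Z2y.  For a fixed X^2 + Y^2,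
   1/X + 1/Y = sqrt ((X^2 + Y^2)/(XY)^2 + 2/(XY)) strictly decreases with XY, so the
   inequality holds, with equality iff w <= 0, i.e. iff Z1 and Z2 lie in adjacent closed
   quadrants.  The argument is pointwise in t: of the hypotheses on the minimizer only
   the absence of collisions q3 = q1, q3 = q2 at time t is used. *)

Section InverseSums.
Variable R : rcfType.

Lemma invrD_sqrt (x y : R) : 0 < x -> 0 < y ->
  x^-1 + y^-1 = Num.sqrt ((x ^+ 2 + y ^+ 2) / (x * y) ^+ 2 + 2 / (x * y)).
Proof.
move=> x0 y0; have xy0 : 0 < x * y by rewrite mulr_gt0.
rewrite (_ : _ + 2 / _ = (x^-1 + y^-1) ^+ 2); last by field; rewrite !gt_eqF.
by rewrite sqrtr_sqr ger0_norm // addr_ge0 // invr_ge0 ltW.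
Qed.

Lemma sqr_add_inv_ltr (s : R) : 0 <= s ->
  {in Num.pos &, {homo (fun P => s / P ^+ 2 + 2 / P) : P P' /~ P < P'}}.
Proof.
move=> s0 P P'; rewrite !posrE => P0 P'0 ltP'P /=.
have lt_sqr : P' ^+ 2 < P ^+ 2 by rewrite ltr_pXn2r // nnegrE ltW.
apply: ler_ltD; first by rewrite ler_wpM2l // lef_pV2 ?ltW ?posrE ?exprn_gt0.
by rewrite ltr_pM2l // ltf_pV2.
Qed.

Lemma ler_invrD (x y x' y' : R) : 0 < x -> 0 < y -> 0 < x' -> 0 < y' ->
  x ^+ 2 + y ^+ 2 = x' ^+ 2 + y' ^+ 2 ->
  (x'^-1 + y'^-1 <= x^-1 + y^-1) = (x * y <= x' * y').
Proof.
move=> x0 y0 x'0 y'0 sum_eq.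
have s0 : 0 <= x ^+ 2 + y ^+ 2 by rewrite addr_ge0 ?sqr_ge0.
have xy0 : 0 < x * y by rewrite mulr_gt0.
rewrite !invrD_sqrt // -sum_eq ler_sqrt; last first.
  by rewrite addr_ge0 // divr_ge0 ?sqr_ge0 // ltW.
by apply: (le_nmono_in (sqr_add_inv_ltr s0)); rewrite posrE mulr_gt0.
Qed.

Lemma eqr_invrD (x y x' y' : R) : 0 < x -> 0 < y -> 0 < x' -> 0 < y' ->
  x ^+ 2 + y ^+ 2 = x' ^+ 2 + y' ^+ 2 ->
  (x^-1 + y^-1 == x'^-1 + y'^-1) = (x * y == x' * y').
Proof.
move=> x0 y0 x'0 y'0 sum_eq.
by rewrite eq_le (ler_invrD x'0 y'0 x0 y0) // ler_invrD // eq_le andbC.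
Qed.

End InverseSums.

Lemma addr_normr_ge0 (R : realDomainType) (w : R) : 0 <= w + `|w|.
Proof. by rewrite -lerBlDr sub0r lerNl -normrN ler_norm. Qed.

Lemma addr_normr_eq0 (R : realDomainType) (w : R) : (w + `|w| == 0) = (w <= 0).
Proof.
case: (lerP 0 w) => [w0 | /ltW w0]; last by rewrite ler0_norm // subrr eqxx.
by rewrite ger0_norm // -mulr2n mulrn_eq0 /= le_eqVlt ltNge w0 orbF eq_sym.
Qed.

Lemma mulr_ge0_cases (R : realDomainType) (x y : R) :
  0 <= x * y <-> (0 <= x /\ 0 <= y) \/ (x <= 0 /\ y <= 0).
Proof.
split=> [xy0 | [[x0 y0] | [x0 y0]]]; [| exact: mulr_ge0 | exact: mulr_le0].
case: (ltrgt0P x) => [x0 | x0 | _].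
- by left; rewrite -(pmulr_rge0 _ x0).
- by right; rewrite -(nmulr_rge0 _ x0).
- by case: (lerP 0 y) => [y0 | /ltW y0]; [left | right].
Qed.

Lemma mulr_le0_cases (R : realDomainType) (x y : R) :
  x * y <= 0 <-> (x <= 0 /\ 0 <= y) \/ (0 <= x /\ y <= 0).
Proof. by rewrite -oppr_ge0 -mulrN mulr_ge0_cases !oppr_ge0 !oppr_le0; tauto. Qed.

Section PlaneGeometry.
Variable R : realType.
Implicit Types p r a b : Defs.point R.

Definition pdot p r : R := p.1 * r.1 + p.2 * r.2.

Definition mirror_potential a b : R :=
  (pnorm (padd a b))^-1 + (pnorm (psub a b))^-1.

Lemma pnorm_sqr p : pnorm p ^+ 2 = p.1 ^+ 2 + p.2 ^+ 2.
Proof. by rewrite sqr_sqrtr // addr_ge0 ?sqr_ge0. Qed.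

Lemma pnorm_gt0 p : p <> (0, 0) -> 0 < pnorm p.
Proof.
case: p => u v nz; rewrite sqrtr_gt0 lt0r addr_ge0 ?sqr_ge0 // andbT /=.
rewrite paddr_eq0 ?sqr_ge0 // !sqrf_eq0.
by apply/negP => /andP[/eqP u0 /eqP v0]; apply: nz; rewrite u0 v0.
Qed.

Lemma psub_neq0 p r : p <> r -> psub p r <> (0, 0).
Proof.
case: p r => [u v] [u' v'] neq [/subr0_eq eq_u /subr0_eq eq_v].
by apply: neq; rewrite eq_u eq_v.
Qed.

Lemma pnorm_tilde1 p : pnorm (tilde1 p) = pnorm p.
Proof. by rewrite /pnorm /= !real_normK ?num_real. Qed.

Lemma pnorm_tilde2 p : pnorm (tilde2 p) = pnorm p.
Proof. by rewrite /pnorm /= sqrrN !real_normK ?num_real. Qed.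

Lemma tilde1_pscale (k : R) p : 0 <= k -> tilde1 (pscale k p) = pscale k (tilde1 p).
Proof. by move=> k0; rewrite /tilde1 /pscale /= !normrM ger0_norm. Qed.

Lemma pnorm_parallelogram a b :
  pnorm (padd a b) ^+ 2 + pnorm (psub a b) ^+ 2 = 2 * (pnorm a ^+ 2 + pnorm b ^+ 2).
Proof. by rewrite !pnorm_sqr /=; ring. Qed.

Lemma sqr_pnorm_add_sub a b :
  (pnorm (padd a b) * pnorm (psub a b)) ^+ 2
  = (pnorm a ^+ 2 + pnorm b ^+ 2) ^+ 2 - 4 * pdot a b ^+ 2.
Proof. by rewrite exprMn !pnorm_sqr /pdot /=; ring. Qed.

Lemma sqr_pdot_tilde a b :
  pdot a b ^+ 2 - pdot (tilde2 a) (tilde1 b) ^+ 2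
  = 2 * (b.1 * b.2 * (a.1 * a.2) + `|b.1 * b.2 * (a.1 * a.2)|).
Proof.
rewrite /pdot /tilde1 /tilde2 /= mulNr -!normrM sqrrB !real_normK ?num_real //.
rewrite -normrM (_ : a.1 * b.1 * (a.2 * b.2) = b.1 * b.2 * (a.1 * a.2)); ring.
Qed.

Lemma mirror_potential_tilde a b : padd a b <> (0, 0) -> psub a b <> (0, 0) ->
  mirror_potential (tilde2 a) (tilde1 b) <= mirror_potential a b /\
  (mirror_potential a b = mirror_potential (tilde2 a) (tilde1 b) <->
   b.1 * b.2 * (a.1 * a.2) <= 0).
Proof.
move=> /pnorm_gt0 X0 /pnorm_gt0 Y0; rewrite /mirror_potential.
set X := pnorm (padd a b) in X0 *; set Y := pnorm (psub a b) in Y0 *.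
set X' := pnorm (padd _ _); set Y' := pnorm (psub _ _).
set w := b.1 * b.2 * (a.1 * a.2).
have sum_eq : X ^+ 2 + Y ^+ 2 = X' ^+ 2 + Y' ^+ 2.
  by rewrite !pnorm_parallelogram pnorm_tilde1 pnorm_tilde2.
have prod_gap : (X' * Y') ^+ 2 - (X * Y) ^+ 2 = 8 * (w + `|w|).
  rewrite !sqr_pnorm_add_sub pnorm_tilde1 pnorm_tilde2.
  by have := sqr_pdot_tilde a b; rewrite -/w; lra.
have le_prod : X * Y <= X' * Y'.
  rewrite -ler_sqr ?nnegrE ?mulr_ge0 ?sqrtr_ge0 // -subr_ge0 prod_gap.
  by rewrite mulr_ge0 ?addr_normr_ge0.
have [X'0 Y'0] : 0 < X' /\ 0 < Y'.
  have := lt_le_trans (mulr_gt0 X0 Y0) le_prod.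
  have X'ge0 : 0 <= X' := sqrtr_ge0 _; have Y'ge0 : 0 <= Y' := sqrtr_ge0 _.
  nra.
split; first by rewrite ler_invrD.
rewrite -addr_normr_eq0; split => [/eqP | w0].
  rewrite eqr_invrD // => /eqP eq_prod.
  by move: prod_gap; rewrite eq_prod subrr => /esym/eqP; rewrite mulf_eq0 pnatr_eq0.
apply/eqP; rewrite eqr_invrD // -(eqrXn2 (n := 2)) ?mulr_ge0 ?sqrtr_ge0 //.
by rewrite eq_sym -subr_eq0 prod_gap (eqP w0) mulr0.
Qed.

End PlaneGeometry.

Section Jacobi.
Variable R : realType.

Lemma Jac2_add_Jac1 (c : config R) :
  padd (Jac2 c) (pscale 2^-1 (Jac1 c)) = psub (body3 c) (body2 c).
Proof. by rewrite /Jac1 /Jac2 /padd /psub /pscale /=; congr (_, _); field. Qed.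

Lemma Jac2_sub_Jac1 (c : config R) :
  psub (Jac2 c) (pscale 2^-1 (Jac1 c)) = psub (body3 c) (body1 c).
Proof. by rewrite /Jac1 /Jac2 /padd /psub /pscale /=; congr (_, _); field. Qed.

Lemma U_mirror (Z1 Z2 : Defs.point R) :
  U Z1 Z2 = (pnorm Z1)^-1 + mirror_potential Z2 (pscale 2^-1 Z1).
Proof. by rewrite /U addrA. Qed.

Lemma U_tilde (Z1 Z2 : Defs.point R) :
  padd Z2 (pscale 2^-1 Z1) <> (0, 0) -> psub Z2 (pscale 2^-1 Z1) <> (0, 0) ->
  U (tilde1 Z1) (tilde2 Z2) <= U Z1 Z2 /\
  (U Z1 Z2 = U (tilde1 Z1) (tilde2 Z2) <-> Z1.1 * Z1.2 * (Z2.1 * Z2.2) <= 0).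
Proof.
move=> add_nz sub_nz; have half_ge0 : 0 <= 2^-1 :> R by rewrite invr_ge0.
rewrite !U_mirror pnorm_tilde1 -tilde1_pscale //.
have [le_mirror eq_mirror] := mirror_potential_tilde add_nz sub_nz.
split; first by rewrite lerD2l.
have -> : Z1.1 * Z1.2 * (Z2.1 * Z2.2)
          = 4 * ((pscale 2^-1 Z1).1 * (pscale 2^-1 Z1).2 * (Z2.1 * Z2.2)).
  by rewrite /=; field.
rewrite pmulr_rle0 // -eq_mirror.
by split => [/addrI | ->].
Qed.

End Jacobi.

Section Quadrants.
Variable R : realType.
Implicit Types p r : Defs.point R.

Lemma in_QI_or_QIII p :
  in_closed_quadrant QI p \/ in_closed_quadrant QIII p <-> 0 <= p.1 * p.2.
Proof. exact: iff_sym (mulr_ge0_cases _ _). Qed.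

Lemma in_QII_or_QIV p :
  in_closed_quadrant QII p \/ in_closed_quadrant QIV p <-> p.1 * p.2 <= 0.
Proof. exact: iff_sym (mulr_le0_cases _ _). Qed.

Lemma adjacent_quadrants_mulr_le0 p r :
  (exists i j, adjacent_quadrants i j /\
     in_closed_quadrant i p /\ in_closed_quadrant j r) <->
  p.1 * p.2 * (r.1 * r.2) <= 0.
Proof.
rewrite mulr_le0_cases -!in_QI_or_QIII -!in_QII_or_QIV.
split=> [[i [j [adj [pi rj]]]] | ].
  by case: i j adj pi rj => -[] //= _; tauto.
by case=> -[[pi | pi] [rj | rj]]; do 2 eexists; (split; [| split; eassumption]).
Qed.

End Quadrants.

Theorem lemma5p4 (R : realType) (q : R -> config R) :
  is_minimizer q ->
  (forall t : R, 0 < t <= 1 -> collision_free (q t)) ->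
  (exists a2 : R, 0 < a2 /\ Jac1 (q 0) = (0, 0) /\ Jac2 (q 0) = (3 * a2, 0)) ->
  in_closed_quadrant QI (Jac1 (q 1)) ->
  in_closed_quadrant QIV (Jac2 (q 1)) ->
  forall t : R, 0 < t <= 1 ->
    U (tilde1 (Jac1 (q t))) (tilde2 (Jac2 (q t))) <= U (Jac1 (q t)) (Jac2 (q t)) /\
    (U (Jac1 (q t)) (Jac2 (q t)) = U (tilde1 (Jac1 (q t))) (tilde2 (Jac2 (q t))) <->
     exists i j : quadrant, adjacent_quadrants i j /\
       in_closed_quadrant i (Jac1 (q t)) /\ in_closed_quadrant j (Jac2 (q t))).
Proof.
move=> _ no_collision _ _ _ t /no_collision [_ [neq13 neq23]].
have [||le_U eq_U] := @U_tilde R (Jac1 (q t)) (Jac2 (q t)).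
- by rewrite Jac2_add_Jac1; apply: psub_neq0 => /esym.
- by rewrite Jac2_sub_Jac1; apply: psub_neq0 => /esym.
split=> //; exact: iff_trans eq_U (iff_sym (adjacent_quadrants_mulr_le0 _ _)).
Qed.
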